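(* The join $\mathsf{BA}\vee\mathsf{SL}$ of $\mathsf{BA}$ and $\mathsf{SL}$ in the lattice of subvarieties of $V(\mathsf{BCA})$ equals $\mathsf{BA}\times\mathsf{SL}$. Here $\mathsf{BA}\times\mathsf{SL}$ is the class of all algebras isomorphic to a direct product $\mathbf{A}_1\times\mathbf{A}_2$ with $\mathbf{A}_1\in\mathsf{BA}$ and $\mathbf{A}_2\in\mathsf{SL}$.
   Context: $\mathbf{WK}^e$ is the three-element algebra on $\{0,\tfrac12,1\}$ of type $\langle\wedge,\vee,\neg,J_2,0,1\rangle$. Its operations are: - $\neg$ swaps $0,1$ and fixes $\tfrac12$; - $\wedge,\vee$ are Boolean on $\{0,1\}$ and return $\tfrac12$ if some argument is $\tfrac12$; - $J_2(1)=1$ and $J_2(\tfrac12)=J_2(0)=0$. $\mathsf{BCA}=ISP(\mathbf{WK}^e)$ and $V(\mathsf{BCA})=HSP(\mathbf{WK}^e)$. $\mathsf{BA}$ is the subvariety of $V(\mathsf{BCA})$ axiomatised relative to it by $J_2x\approx x$. $\mathsf{SL}$ is the subvariety axiomatised relative to it by $J_2x\approx1$. *)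

Record alg := Alg {
  car :> Type;
  a_meet : car -> car -> car;
  a_join : car -> car -> car;
  a_neg  : car -> car;
  a_J2   : car -> car;
  a_zero : car;
  a_one  : car
}.

Arguments a_meet {a} _ _.
Arguments a_join {a} _ _.
Arguments a_neg {a} _.
Arguments a_J2 {a} _.
Arguments a_zero {a}.
Arguments a_one {a}.

Definition is_hom (A B : alg) (f : A -> B) : Prop :=
  (forall x y, f (a_meet x y) = a_meet (f x) (f y)) /\
  (forall x y, f (a_join x y) = a_join (f x) (f y)) /\
  (forall x, f (a_neg x) = a_neg (f x)) /\
  (forall x, f (a_J2 x) = a_J2 (f x)) /\
  f a_zero = a_zero /\
  f a_one = a_one.

Definition injective {X Y : Type} (f : X -> Y) : Prop :=
  forall x y, f x = f y -> x = y.
Definition surjective {X Y : Type} (f : X -> Y) : Prop :=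
  forall y, exists x, f x = y.

Definition iso (A B : alg) : Prop :=
  exists f : A -> B, is_hom A B f /\ injective f /\ surjective f.

Definition prod_alg (I : Type) (B : I -> alg) : alg :=
  {| car := forall i, B i;
     a_meet := fun f g i => a_meet (f i) (g i);
     a_join := fun f g i => a_join (f i) (g i);
     a_neg  := fun f i => a_neg (f i);
     a_J2   := fun f i => a_J2 (f i);
     a_zero := fun i => a_zero;
     a_one  := fun i => a_one |}.

Definition prod2 (A1 A2 : alg) : alg :=
  {| car := (A1 * A2)%type;
     a_meet := fun p q => (a_meet (fst p) (fst q), a_meet (snd p) (snd q));
     a_join := fun p q => (a_join (fst p) (fst q), a_join (snd p) (snd q));
     a_neg  := fun p => (a_neg (fst p), a_neg (snd p));
     a_J2   := fun p => (a_J2 (fst p), a_J2 (snd p));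
     a_zero := (a_zero, a_zero);
     a_one  := (a_one, a_one) |}.

Definition aclass := alg -> Prop.

(* HSP(K): homomorphic images of subalgebras of products of members of K.
   A subalgebra is represented by an algebra C with an injective homomorphism
   into the product. *)
Definition HSP (K : aclass) : aclass := fun A =>
  exists (I : Type) (B : I -> alg) (C : alg) (e : C -> prod_alg I B) (h : C -> A),
    (forall i, K (B i)) /\
    is_hom C (prod_alg I B) e /\ injective e /\
    is_hom C A h /\ surjective h.

Definition variety (K : aclass) : Prop :=
  (forall (A B : alg) (h : A -> B), is_hom A B h -> surjective h -> K A -> K B) /\
  (forall (A B : alg) (e : A -> B), is_hom A B e -> injective e -> K B -> K A) /\
  (forall (I : Type) (B : I -> alg), (forall i, K (B i)) -> K (prod_alg I B)).

Inductive wk3 := W0 | Whalf | W1.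

Definition wk_neg (x : wk3) : wk3 :=
  match x with W0 => W1 | Whalf => Whalf | W1 => W0 end.
Definition wk_meet (x y : wk3) : wk3 :=
  match x, y with
  | Whalf, _ | _, Whalf => Whalf
  | W1, W1 => W1
  | _, _ => W0
  end.
Definition wk_join (x y : wk3) : wk3 :=
  match x, y with
  | Whalf, _ | _, Whalf => Whalf
  | W0, W0 => W0
  | _, _ => W1
  end.
Definition wk_J2 (x : wk3) : wk3 :=
  match x with W1 => W1 | _ => W0 end.

Definition WKe : alg :=
  {| car := wk3; a_meet := wk_meet; a_join := wk_join; a_neg := wk_neg;
     a_J2 := wk_J2; a_zero := W0; a_one := W1 |}.

Definition VBCA : aclass := HSP (fun A => A = WKe).

Definition BA : aclass := fun A => VBCA A /\ forall x : A, a_J2 x = x.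
Definition SL : aclass := fun A => VBCA A /\ forall x : A, a_J2 x = a_one.

Definition subvar_join (K1 K2 : aclass) : aclass := fun A =>
  forall K : aclass, variety K -> (forall B, K B -> VBCA B) ->
    (forall B, K1 B -> K B) -> (forall B, K2 B -> K B) -> K A.

Definition prod_class (K1 K2 : aclass) : aclass := fun A =>
  exists A1 A2 : alg, K1 A1 /\ K2 A2 /\ iso A (prod2 A1 A2).

From Stdlib Require Import FunctionalExtensionality ProofIrrelevance IndefiniteDescription.

(* Let C be the class of algebras of V(BCA) on which J2 is an endomorphism, i.e. which
   satisfy J2 (x ∨ y) ≈ J2 x ∨ J2 y and J2 ¬x ≈ ¬J2 x.  It is a subvariety of V(BCA)
   containing BA and SL, hence it contains their join.  Conversely, every A in C splits
   as A ≅ A1 × A2 along x ↦ (J2 x, x ∧ 0): A1 is the subalgebra of fixed points of J2,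
   which lies in BA, and A2 is the image of the retraction x ↦ x ∧ 0, which lies in SL;
   the inverse map is (p, q) ↦ q ∨ p, by the identity x ≈ (x ∧ 0) ∨ J2 x.  Finally, a
   variety containing BA and SL contains BA × SL, being closed under products and
   subalgebras.  Every identity used along the way holds in WK^e, where it is checked by
   evaluation, and therefore in all of HSP(WK^e). *)

Lemma hom_id (A : alg) : is_hom A A (fun x => x).
Proof. repeat split. Qed.

Lemma hom_comp {A B C : alg} {f : A -> B} {g : B -> C} :
  is_hom A B f -> is_hom B C g -> is_hom A C (fun x => g (f x)).
Proof.
  intros (f1 & f2 & f3 & f4 & f5 & f6) (g1 & g2 & g3 & g4 & g5 & g6).
  repeat split; intros;
    rewrite ?f1, ?f2, ?f3, ?f4, ?f5, ?f6, ?g1, ?g2, ?g3, ?g4, ?g5, ?g6; reflexivity.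
Qed.

Lemma injective_comp {X Y Z : Type} {f : X -> Y} {g : Y -> Z} :
  injective f -> injective g -> injective (fun x => g (f x)).
Proof. intros Hf Hg x y E. apply Hf, Hg, E. Qed.

Lemma surjective_comp {X Y Z : Type} {f : X -> Y} {g : Y -> Z} :
  surjective f -> surjective g -> surjective (fun x => g (f x)).
Proof.
  intros Hf Hg z. destruct (Hg z) as [y <-]. destruct (Hf y) as [x <-]. now exists x.
Qed.

Lemma surjective_section {X Y : Type} (f : X -> Y) :
  surjective f -> exists g : Y -> X, forall y, f (g y) = y.
Proof. apply functional_choice. Qed.

Lemma hom_fst (A1 A2 : alg) : is_hom (prod2 A1 A2) A1 fst.
Proof. repeat split. Qed.

Lemma hom_snd (A1 A2 : alg) : is_hom (prod2 A1 A2) A2 snd.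
Proof. repeat split. Qed.

Lemma hom_pair {D A1 A2 : alg} {f : D -> A1} {g : D -> A2} :
  is_hom D A1 f -> is_hom D A2 g -> is_hom D (prod2 A1 A2) (fun x => (f x, g x)).
Proof.
  intros (f1 & f2 & f3 & f4 & f5 & f6) (g1 & g2 & g3 & g4 & g5 & g6).
  repeat split; intros; cbn;
    rewrite ?f1, ?f2, ?f3, ?f4, ?f5, ?f6, ?g1, ?g2, ?g3, ?g4, ?g5, ?g6; reflexivity.
Qed.

Definition prod_map {J : Type} {A B : J -> alg} (f : forall j, A j -> B j)
  (x : prod_alg J A) : prod_alg J B :=
  fun j => f j (x j).

Lemma hom_prod_map {J : Type} {A B : J -> alg} (f : forall j, A j -> B j) :
  (forall j, is_hom (A j) (B j) (f j)) -> is_hom _ _ (prod_map f).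
Proof.
  intros Hf. repeat split; intros; extensionality j; unfold prod_map; cbn;
    destruct (Hf j) as (? & ? & ? & ? & ? & ?); auto.
Qed.

Lemma prod_map_injective {J : Type} {A B : J -> alg} (f : forall j, A j -> B j) :
  (forall j, injective (f j)) -> injective (prod_map f).
Proof.
  intros Hf x y E. extensionality j. apply Hf. exact (f_equal (fun z => z j) E).
Qed.

Lemma prod_map_surjective {J : Type} {A B : J -> alg} (f : forall j, A j -> B j) :
  (forall j, surjective (f j)) -> surjective (prod_map f).
Proof.
  intros Hf y.
  exists (fun j => proj1_sig (constructive_indefinite_description _ (Hf j (y j)))).
  extensionality j. unfold prod_map.
  destruct (constructive_indefinite_description _ _); assumption.
Qed.

Definition flatten {J : Type} {I : J -> Type} (B : forall j, I j -> alg)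
  (x : prod_alg J (fun j => prod_alg (I j) (B j))) :
  prod_alg {j : J & I j} (fun p => B (projT1 p) (projT2 p)) :=
  fun p => x (projT1 p) (projT2 p).

Lemma hom_flatten {J : Type} {I : J -> Type} (B : forall j, I j -> alg) :
  is_hom _ _ (flatten B).
Proof. repeat split. Qed.

Lemma flatten_injective {J : Type} {I : J -> Type} (B : forall j, I j -> alg) :
  injective (flatten B).
Proof.
  intros x y E. extensionality j. extensionality i.
  exact (f_equal (fun z => z (existT _ j i)) E).
Qed.

Record closed (A : alg) (P : A -> Prop) : Prop := {
  closed_meet : forall x y, P x -> P y -> P (a_meet x y);
  closed_join : forall x y, P x -> P y -> P (a_join x y);
  closed_neg : forall x, P x -> P (a_neg x);
  closed_J2 : forall x, P x -> P (a_J2 x);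
  closed_zero : P a_zero;
  closed_one : P a_one }.

Definition subalg (A : alg) (P : A -> Prop) (HP : closed A P) : alg :=
  {| car := {x : A | P x};
     a_meet := fun x y => exist P _ (closed_meet A P HP _ _ (proj2_sig x) (proj2_sig y));
     a_join := fun x y => exist P _ (closed_join A P HP _ _ (proj2_sig x) (proj2_sig y));
     a_neg := fun x => exist P _ (closed_neg A P HP _ (proj2_sig x));
     a_J2 := fun x => exist P _ (closed_J2 A P HP _ (proj2_sig x));
     a_zero := exist P _ (closed_zero A P HP);
     a_one := exist P _ (closed_one A P HP) |}.

Lemma hom_proj1_sig (A : alg) (P : A -> Prop) (HP : closed A P) :
  is_hom (subalg A P HP) A (@proj1_sig _ _).
Proof. repeat split. Qed.

Lemma proj1_sig_injective (A : alg) (P : A -> Prop) (HP : closed A P) :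
  injective (@proj1_sig _ _ : subalg A P HP -> A).
Proof. intros [x px] [y py] E. now apply subset_eq_compat. Qed.

Lemma hom_corestrict {D A : alg} {P : A -> Prop} (HP : closed A P) {f : D -> A}
  (Pf : forall x, P (f x)) :
  is_hom D A f -> is_hom D (subalg A P HP) (fun x => exist P (f x) (Pf x)).
Proof.
  intros (f1 & f2 & f3 & f4 & f5 & f6).
  repeat split; intros; apply subset_eq_compat; auto.
Qed.

Lemma closed_equalizer {D A : alg} {f g : D -> A} :
  is_hom D A f -> is_hom D A g -> closed D (fun x => f x = g x).
Proof.
  intros (f1 & f2 & f3 & f4 & f5 & f6) (g1 & g2 & g3 & g4 & g5 & g6).
  split; intros; rewrite ?f1, ?f2, ?f3, ?f4, ?f5, ?f6, ?g1, ?g2, ?g3, ?g4, ?g5, ?g6;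
    congruence.
Qed.

(* The quotient of [A] by the kernel of [r], represented by the fixed points of [r]. *)
Section Retract.
Variables (A : alg) (r : A -> A).
Hypothesis r_idem : forall x, r (r x) = r x.
Hypothesis r_meet : forall x y, r (a_meet x y) = r (a_meet (r x) (r y)).
Hypothesis r_join : forall x y, r (a_join x y) = r (a_join (r x) (r y)).
Hypothesis r_neg : forall x, r (a_neg x) = r (a_neg (r x)).
Hypothesis r_J2 : forall x, r (a_J2 x) = r (a_J2 (r x)).

Definition retraction (x : A) : {y : A | r y = y} := exist _ (r x) (r_idem x).

Definition retract_alg : alg :=
  {| car := {y : A | r y = y};
     a_meet := fun x y => retraction (a_meet (proj1_sig x) (proj1_sig y));
     a_join := fun x y => retraction (a_join (proj1_sig x) (proj1_sig y));
     a_neg := fun x => retraction (a_neg (proj1_sig x));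
     a_J2 := fun x => retraction (a_J2 (proj1_sig x));
     a_zero := retraction a_zero;
     a_one := retraction a_one |}.

Lemma hom_retraction : is_hom A retract_alg retraction.
Proof. repeat split; intros; apply subset_eq_compat; cbn; auto. Qed.

Lemma retraction_surjective : surjective (retraction : A -> retract_alg).
Proof. intros [y Hy]. exists y. now apply subset_eq_compat. Qed.
End Retract.

Inductive term : Type :=
  | tvar (n : nat)
  | tmeet (s u : term)
  | tjoin (s u : term)
  | tneg (s : term)
  | tJ2 (s : term)
  | tzero
  | tone.

Fixpoint ev (A : alg) (v : nat -> A) (t : term) : A :=
  match t with
  | tvar n => v n
  | tmeet s u => a_meet (ev A v s) (ev A v u)
  | tjoin s u => a_join (ev A v s) (ev A v u)
  | tneg s => a_neg (ev A v s)
  | tJ2 s => a_J2 (ev A v s)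
  | tzero => a_zero
  | tone => a_one
  end.

Definition satisfies (A : alg) (s t : term) : Prop :=
  forall v : nat -> A, ev A v s = ev A v t.

Definition models (E : term -> term -> Prop) : aclass :=
  fun A => forall s t, E s t -> satisfies A s t.

Lemma ev_hom {A B : alg} {f : A -> B} (v : nat -> A) (t : term) :
  is_hom A B f -> f (ev A v t) = ev B (fun n => f (v n)) t.
Proof.
  intros (f1 & f2 & f3 & f4 & f5 & f6).
  induction t; cbn; rewrite ?f1, ?f2, ?f3, ?f4, ?f5, ?f6; congruence.
Qed.

Lemma ev_prod (I : Type) (B : I -> alg) (v : nat -> prod_alg I B) (t : term) (i : I) :
  ev (prod_alg I B) v t i = ev (B i) (fun n => v n i) t.
Proof. induction t; cbn; congruence. Qed.

Lemma satisfies_hom_image {A B : alg} {h : A -> B} (s t : term) :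
  is_hom A B h -> surjective h -> satisfies A s t -> satisfies B s t.
Proof.
  intros Hh Hsurj HA v.
  destruct (surjective_section h Hsurj) as [g Hg].
  replace v with (fun n => h (g (v n))) by (extensionality n; apply Hg).
  rewrite <- !(ev_hom _ _ Hh). f_equal. apply HA.
Qed.

Lemma satisfies_subalg {A B : alg} {e : A -> B} (s t : term) :
  is_hom A B e -> injective e -> satisfies B s t -> satisfies A s t.
Proof. intros He Hinj HB v. apply Hinj. rewrite !(ev_hom _ _ He). apply HB. Qed.

Lemma satisfies_prod (I : Type) (B : I -> alg) (s t : term) :
  (forall i, satisfies (B i) s t) -> satisfies (prod_alg I B) s t.
Proof. intros HB v. extensionality i. rewrite !ev_prod. apply HB. Qed.

Lemma variety_models (E : term -> term -> Prop) : variety (models E).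
Proof.
  split; [|split].
  - intros A B h Hh Hsurj HA s t Est.
    exact (satisfies_hom_image s t Hh Hsurj (HA s t Est)).
  - intros A B e He Hinj HB s t Est. exact (satisfies_subalg s t He Hinj (HB s t Est)).
  - intros I B HB s t Est. apply satisfies_prod. intro i. exact (HB i s t Est).
Qed.

Lemma HSP_satisfies (K : aclass) (s t : term) :
  (forall B, K B -> satisfies B s t) -> forall A, HSP K A -> satisfies A s t.
Proof.
  intros HK A (I & B & C & e & h & HB & He & Hinj & Hh & Hsurj).
  apply (satisfies_hom_image s t Hh Hsurj), (satisfies_subalg s t He Hinj).
  apply satisfies_prod. intro i. apply HK, HB.
Qed.

Lemma HSP_hom_image (K : aclass) (A B : alg) (h : A -> B) :
  is_hom A B h -> surjective h -> HSP K A -> HSP K B.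
Proof.
  intros Hh Hsurj (I & Bs & C & e & h0 & HK & He & Hinj & Hh0 & Hsurj0).
  exists I, Bs, C, e, (fun c => h (h0 c)).
  repeat (split; [assumption|]).
  split; [exact (hom_comp Hh0 Hh) | exact (surjective_comp Hsurj0 Hsurj)].
Qed.

Lemma HSP_subalg (K : aclass) (A B : alg) (e : A -> B) :
  is_hom A B e -> injective e -> HSP K B -> HSP K A.
Proof.
  intros He Hinj (I & Bs & C & c & h & HK & Hc & Hcinj & Hh & Hsurj).
  (* The pullback of [h] along [e]. *)
  pose (HP := closed_equalizer (hom_comp (hom_fst C A) Hh) (hom_comp (hom_snd C A) He)).
  exists I, Bs, (subalg _ _ HP),
    (fun p => c (fst (proj1_sig p))), (fun p => snd (proj1_sig p)).
  split; [exact HK|]. split; [|split; [|split]].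
  - exact (hom_comp (hom_comp (hom_proj1_sig _ _ HP) (hom_fst C A)) Hc).
  - intros [[x a] Hx] [[y b] Hy] E. cbn in *.
    apply Hcinj in E. subst y.
    apply subset_eq_compat. f_equal. apply Hinj. congruence.
  - exact (hom_comp (hom_proj1_sig _ _ HP) (hom_snd C A)).
  - intro a. destruct (Hsurj (e a)) as [x Hx]. now exists (exist _ (x, a) Hx).
Qed.

Set Implicit Arguments.
Record HSP_data (K : aclass) (A : alg) : Type := {
  hsp_index : Type;
  hsp_factor : hsp_index -> alg;
  hsp_sub : alg;
  hsp_emb : hsp_sub -> prod_alg hsp_index hsp_factor;
  hsp_onto : hsp_sub -> A;
  hsp_factor_in : forall i, K (hsp_factor i);
  hsp_emb_hom : is_hom _ _ hsp_emb;
  hsp_emb_injective : injective hsp_emb;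
  hsp_onto_hom : is_hom _ _ hsp_onto;
  hsp_onto_surjective : surjective hsp_onto }.
Unset Implicit Arguments.

Lemma HSP_data_of (K : aclass) (A : alg) : HSP K A -> HSP_data K A.
Proof.
  intro H.
  apply (fun ex => proj1_sig (constructive_indefinite_description (fun _ => True) ex)).
  destruct H as (I & B & C & e & h & HB & He & Hinj & Hh & Hsurj).
  now exists (@Build_HSP_data K A I B C e h HB He Hinj Hh Hsurj).
Qed.

Lemma HSP_prod (K : aclass) (J : Type) (A : J -> alg) :
  (forall j, HSP K (A j)) -> HSP K (prod_alg J A).
Proof.
  intro H. pose (d := fun j => HSP_data_of K (A j) (H j)).
  exists {j : J & hsp_index (d j)}, (fun p => hsp_factor (d (projT1 p)) (projT2 p)),
    (prod_alg J (fun j => hsp_sub (d j))),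
    (fun x => flatten _ (prod_map (fun j => hsp_emb (d j)) x)),
    (prod_map (fun j => hsp_onto (d j))).
  split; [intros [j i]; apply hsp_factor_in|].
  split; [|split; [|split]].
  - exact (hom_comp (hom_prod_map _ (fun j => hsp_emb_hom (d j))) (hom_flatten _)).
  - exact (injective_comp (prod_map_injective _ (fun j => hsp_emb_injective (d j)))
                          (flatten_injective _)).
  - exact (hom_prod_map _ (fun j => hsp_onto_hom (d j))).
  - exact (prod_map_surjective _ (fun j => hsp_onto_surjective (d j))).
Qed.

Lemma variety_HSP (K : aclass) : variety (HSP K).
Proof.
  split; [|split].
  - exact (HSP_hom_image K).
  - exact (HSP_subalg K).
  - exact (HSP_prod K).
Qed.

Lemma variety_inter (K1 K2 : aclass) :
  variety K1 -> variety K2 -> variety (fun A => K1 A /\ K2 A).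
Proof.
  intros (H1 & S1 & P1) (H2 & S2 & P2). split; [|split].
  - intros A B h Hh Hsurj [HA1 HA2].
    split; [exact (H1 _ _ h Hh Hsurj HA1) | exact (H2 _ _ h Hh Hsurj HA2)].
  - intros A B e He Hinj [HB1 HB2].
    split; [exact (S1 _ _ e He Hinj HB1) | exact (S2 _ _ e He Hinj HB2)].
  - intros I B HB. split; [apply P1 | apply P2]; intro i; apply HB.
Qed.

Lemma variety_prod2 (K : aclass) (A1 A2 : alg) :
  variety K -> K A1 -> K A2 -> K (prod2 A1 A2).
Proof.
  intros (_ & HS & HP) H1 H2.
  pose (F := fun b : bool => if b then A1 else A2).
  apply (HS _ (prod_alg bool F) (fun (p : prod2 A1 A2) b =>
           match b return car (F b) with true => fst p | false => snd p end)).
  - repeat split; intros; extensionality b; destruct b; reflexivity.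
  - intros [x1 x2] [y1 y2] E.
    pose proof (f_equal (fun z => z true) E). pose proof (f_equal (fun z => z false) E).
    cbn in *. congruence.
  - apply HP. intros []; assumption.
Qed.

Lemma VBCA_satisfies (s t : term) :
  satisfies WKe s t -> forall A, VBCA A -> satisfies A s t.
Proof. intro HW. apply HSP_satisfies. now intros B ->. Qed.

Definition val2 {A : alg} (x y : A) (n : nat) : A :=
  match n with 0 => x | _ => y end.

Ltac reify x y t :=
  lazymatch t with
  | a_meet ?a ?b => let s := reify x y a in let u := reify x y b in constr:(tmeet s u)
  | a_join ?a ?b => let s := reify x y a in let u := reify x y b in constr:(tjoin s u)
  | a_neg ?a => let s := reify x y a in constr:(tneg s)
  | a_J2 ?a => let s := reify x y a in constr:(tJ2 s)
  | a_zero => constr:(tzero)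
  | a_one => constr:(tone)
  | x => constr:(tvar 0)
  | y => constr:(tvar 1)
  end.

(* Proves an equation in an algebra of V(BCA) between expressions in [x] and [y] by
   reading it as an identity and checking that identity on all valuations in WK^e. *)
Ltac by_WKe HA x y :=
  lazymatch goal with
  | |- ?l = ?r =>
      let s := reify x y l in
      let t := reify x y r in
      refine (VBCA_satisfies s t _ _ HA (val2 x y));
      let v := fresh "v" in intro v; cbn; destruct (v 0), (v 1); reflexivity
  end.

Inductive J2_endo_law : term -> term -> Prop :=
  | J2_join_law :
      J2_endo_law (tJ2 (tjoin (tvar 0) (tvar 1))) (tjoin (tJ2 (tvar 0)) (tJ2 (tvar 1)))
  | J2_neg_law : J2_endo_law (tJ2 (tneg (tvar 0))) (tneg (tJ2 (tvar 0))).

Definition VBCA_J2_endo : aclass := fun A => VBCA A /\ models J2_endo_law A.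

Lemma variety_VBCA_J2_endo : variety VBCA_J2_endo.
Proof. apply variety_inter; [apply variety_HSP | apply variety_models]. Qed.

Section VBCA_algebra.
Variable A : alg.
Hypothesis HA : VBCA A.

Lemma J2_meet (x y : A) : a_J2 (a_meet x y) = a_meet (a_J2 x) (a_J2 y).
Proof. by_WKe HA x y. Qed.
Lemma J2_idem (x : A) : a_J2 (a_J2 x) = a_J2 x.
Proof. by_WKe HA x x. Qed.
Lemma J2_zero : a_J2 (a_zero : A) = a_zero.
Proof. by_WKe HA (a_zero : A) (a_zero : A). Qed.
Lemma J2_one : a_J2 (a_one : A) = a_one.
Proof. by_WKe HA (a_zero : A) (a_zero : A). Qed.
Lemma join_idem (x : A) : a_join x x = x.
Proof. by_WKe HA x x. Qed.
Lemma join_zero_l (x : A) : a_join a_zero x = x.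
Proof. by_WKe HA x x. Qed.
Lemma neg_one : a_neg (a_one : A) = a_zero.
Proof. by_WKe HA (a_zero : A) (a_zero : A). Qed.
Lemma meet_zero_idem (x : A) : a_meet (a_meet x a_zero) a_zero = a_meet x a_zero.
Proof. by_WKe HA x x. Qed.
Lemma meet_zero_meet (x y : A) :
  a_meet (a_meet x y) a_zero = a_meet (a_meet (a_meet x a_zero) (a_meet y a_zero)) a_zero.
Proof. by_WKe HA x y. Qed.
Lemma meet_zero_join (x y : A) :
  a_meet (a_join x y) a_zero = a_meet (a_join (a_meet x a_zero) (a_meet y a_zero)) a_zero.
Proof. by_WKe HA x y. Qed.
Lemma meet_zero_neg (x : A) :
  a_meet (a_neg x) a_zero = a_meet (a_neg (a_meet x a_zero)) a_zero.
Proof. by_WKe HA x x. Qed.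
Lemma meet_zero_J2 (x : A) :
  a_meet (a_J2 x) a_zero = a_meet (a_J2 (a_meet x a_zero)) a_zero.
Proof. by_WKe HA x x. Qed.
Lemma meet_zero_J2_one (x : A) : a_meet (a_J2 x) a_zero = a_meet a_one a_zero.
Proof. by_WKe HA x x. Qed.
Lemma J2_meet_zero (x : A) : a_J2 (a_meet x a_zero) = a_zero.
Proof. by_WKe HA x x. Qed.
Lemma meet_zero_join_J2 (x y : A) :
  a_meet (a_join (a_meet x a_zero) (a_J2 y)) a_zero = a_meet x a_zero.
Proof. by_WKe HA x y. Qed.
Lemma join_meet_zero_J2 (x : A) : a_join (a_meet x a_zero) (a_J2 x) = x.
Proof. by_WKe HA x x. Qed.

Definition zero_part : alg := retract_alg A (fun x => a_meet x a_zero) meet_zero_idem.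

Definition meet_zero (x : A) : zero_part := retraction A _ meet_zero_idem x.

Lemma hom_meet_zero : is_hom A zero_part meet_zero.
Proof.
  exact (hom_retraction A _ meet_zero_idem meet_zero_meet meet_zero_join meet_zero_neg
           meet_zero_J2).
Qed.

Lemma zero_part_SL : SL zero_part.
Proof.
  split.
  - exact (HSP_hom_image _ _ _ _ hom_meet_zero (retraction_surjective _ _ _) HA).
  - intros [x Hx]. apply subset_eq_compat. apply meet_zero_J2_one.
Qed.

Section Decomposition.
Hypothesis HE : models J2_endo_law A.

Lemma J2_join (x y : A) : a_J2 (a_join x y) = a_join (a_J2 x) (a_J2 y).
Proof. exact (HE _ _ J2_join_law (val2 x y)). Qed.

Lemma J2_neg (x : A) : a_J2 (a_neg x) = a_neg (a_J2 x).
Proof. exact (HE _ _ J2_neg_law (val2 x x)). Qed.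

Lemma hom_J2 : is_hom A A a_J2.
Proof. repeat split; auto using J2_meet, J2_join, J2_neg, J2_zero, J2_one. Qed.

Definition J2_fixed : alg := subalg A _ (closed_equalizer hom_J2 (hom_id A)).

Definition J2_part (x : A) : J2_fixed := exist _ (a_J2 x) (J2_idem x).

Lemma J2_fixed_BA : BA J2_fixed.
Proof.
  split.
  - exact (HSP_subalg _ _ _ _ (hom_proj1_sig _ _ _) (proj1_sig_injective _ _ _) HA).
  - intros [x Hx]. now apply subset_eq_compat.
Qed.

Lemma split_iso : iso A (prod2 J2_fixed zero_part).
Proof.
  exists (fun x => (J2_part x, meet_zero x)). split; [|split].
  - exact (hom_pair (hom_corestrict _ J2_idem hom_J2) hom_meet_zero).
  - intros x y E. injection E as EJ E0.
    rewrite <- (join_meet_zero_J2 x), <- (join_meet_zero_J2 y). congruence.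
  - intros [[p Hp] [q Hq]]. cbn in Hp, Hq.
    exists (a_join q p). f_equal; apply subset_eq_compat; cbn.
    + rewrite J2_join, Hp, <- Hq, J2_meet_zero. apply join_zero_l.
    + rewrite <- Hp, <- Hq at 1. rewrite meet_zero_join_J2. exact Hq.
Qed.

End Decomposition.

Lemma VBCA_J2_endo_split : models J2_endo_law A -> prod_class BA SL A.
Proof.
  intro HE. exists (J2_fixed HE), zero_part.
  split; [exact (J2_fixed_BA HE) | split; [exact zero_part_SL | exact (split_iso HE)]].
Qed.

End VBCA_algebra.

Lemma BA_J2_endo (A : alg) : BA A -> VBCA_J2_endo A.
Proof.
  intros [HA HJ]. split; [exact HA|].
  intros s t []; intro v; cbn; rewrite !HJ; reflexivity.
Qed.

Lemma SL_J2_endo (A : alg) : SL A -> VBCA_J2_endo A.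
Proof.
  intros [HA HJ]. split; [exact HA|].
  intros s t []; intro v; cbn; rewrite !HJ.
  - now rewrite join_idem.
  - rewrite neg_one by exact HA. rewrite <- (HJ a_zero). exact (J2_zero A HA).
Qed.

Theorem corollary4p11 :
  forall A : alg, subvar_join BA SL A <-> prod_class BA SL A.
Proof.
  intros A; split.
  - intro HA. destruct (HA VBCA_J2_endo) as [HV HE].
    + exact variety_VBCA_J2_endo.
    + now intros B [].
    + exact BA_J2_endo.
    + exact SL_J2_endo.
    + exact (VBCA_J2_endo_split A HV HE).
  - intros (A1 & A2 & H1 & H2 & f & Hf & Hinj & _) K HK _ HBA HSL.
    apply (proj1 (proj2 HK) A _ f Hf Hinj).
    apply variety_prod2; auto.
Qed.
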